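(* Let $p$ be a prime with $p \equiv 5 \pmod 8$ and $p = s^2 + 4$ for some odd integer $s$. Let $g$ be a generator of $\mathbb{F}_p^*$, $C_0^{(4)}$ the subgroup of index $4$ of $\mathbb{F}_p^*$, $C_i^{(4)} = g^i C_0^{(4)}$, and $D = C_0^{(4)} \cup C_1^{(4)}$. Let $S_D$ be the set of $a \in \mathbb{F}_p^*$ such that the equation $x - y = a$ has exactly $(p-5)/4$ solutions $(x,y)\in D\times D$. Then $S_D = C_0^{(2)}$ or $S_D = C_1^{(2)}$, where $C_0^{(2)}$ is the subgroup of index $2$ of $\mathbb{F}_p^*$ (the nonzero squares) and $C_1^{(2)} = g C_0^{(2)}$.
   Context: Under the stated hypotheses it is known that $D$ is a $(p,(p-1)/2,(p-5)/4)$-almost difference set of $\mathbb{F}_p^+$, i.e. exactly $(p-1)/2$ nonzero $a$ give $(p-5)/4$ solutions of $x-y=a$ in $D\times D$ and all other nonzero $a$ give $(p-1)/4$ solutions. *)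

From mathcomp Require Import all_boot all_algebra.
Set Implicit Arguments. Unset Strict Implicit. Unset Printing Implicit Defensive.
Import GRing.Theory.
Local Open Scope ring_scope.

Definition is_generator (F : finFieldType) (g : F) : Prop :=
  g != 0 /\ forall x : F, x != 0 -> exists k : nat, x = g ^+ k.

Definition cyc_class (F : finFieldType) (g : F) (e i : nat) : {set F} :=
  [set x : F | [exists k : 'I_#|F|, x == g ^+ (e * k + i)%N]].

Definition diff_count (F : finFieldType) (D : {set F}) (a : F) : nat :=
  #|[set xy : F * F | [&& xy.1 \in D, xy.2 \in D & xy.1 - xy.2 == a]]|.

From mathcomp Require Import all_boot all_algebra algC finfield zify ring.
Import GRing.Theory Num.Theory.
Local Open Scope ring_scope.
Set Implicit Arguments. Unset Strict Implicit.

(* Let N(a) count the representations a = x - y with x, y in D. Multiplication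
   by the fourth power -g^2 preserves D and N(-a) = N(a), so N takes a value u
   on the squares and a value v on the non-squares; counting all pairs gives
   u + v = (p - 3)/2. The Jacobi sum J = R + I i of the quartic character has
   norm R^2 + I^2 = p, and sorting its terms by the classes of x and x + 1
   shows I = 2 (u - v). Since also p = s^2 + 4, uniqueness of the
   representation p = a^2 + 4 b^2 forces u - v = +-1, so exactly one of u, v
   equals (p - 5)/4. *)

Lemma sum_except_0N1 (F : finFieldType) (V : zmodType) (f : F -> V) :
  \sum_(y | (y != 0) && (y + 1 != 0)) f y = \sum_y f y - f 0 - f (-1).
Proof.
rewrite [in RHS](bigD1 0) //= [in RHS](bigD1 (-1)) /=; last
  by rewrite oppr_eq0 oner_eq0.
rewrite [f 0 + _]addrC addrK [f (-1) + _]addrC addrK.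
by apply: eq_bigl => y; rewrite addr_eq0.
Qed.

Section JacobiSum.

Variables (F : finFieldType) (K : fieldType) (psi : F -> K).
Hypothesis psiM : forall x y, psi (x * y) = psi x * psi y.
Hypothesis psi0 : psi 0 = 0.
Hypothesis psi1 : psi 1 = 1.
Hypothesis sum_psi : \sum_x psi x = 0.
Hypothesis sum_psi2 : \sum_x psi x ^+ 2 = 0.

(* For [t != 1], [mob t] maps [F :\ -1] bijectively onto [F :\ t]. *)
Let mob (t y : F) := (t * y + 1) / (y + 1).

Lemma jacobi_sum_rescale y : y != 0 -> y + 1 != 0 ->
  psi y^-1 * psi (y + 1)^-1 * \sum_x psi x * psi (x + 1) =
  \sum_t psi t * psi (mob t y).
Proof.
move=> y0 y1; rewrite mulr_sumr (reindex_inj (mulIf y0)); apply: eq_bigr => t _.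
have -> : psi t = psi (t * y) * psi y^-1 by rewrite -psiM mulfK.
rewrite /mob psiM; ring.
Qed.

Lemma mob_ext_inj t : t != 1 -> injective (fun y => if y == -1 then t else mob t y).
Proof.
have yP y : (y + 1 != 0) = (y != -1) by rewrite addr_eq0.
move=> t1; have mob_neq y : y != -1 -> mob t y != t.
  move=> yN1; apply: contra t1 => /eqP e.
  have : t * y + 1 = t * (y + 1) by rewrite -[X in _ = X * _]e /mob divfK ?yP.
  by rewrite mulrDr mulr1 => /addrI <-.
move=> y1 y2 /=.
case: (eqVneq y1 (-1)) => [->|y1N]; case: (eqVneq y2 (-1)) => [->|y2N] //.
- by move=> e; have := mob_neq _ y2N; rewrite -e eqxx.
- by move=> e; have := mob_neq _ y1N; rewrite e eqxx.
move/eqP; rewrite /mob eqr_div ?yP // => /eqP e.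
have : (t - 1) * (y1 - y2) = 0.
  by transitivity ((t * y1 + 1) * (y2 + 1) - (t * y2 + 1) * (y1 + 1)); [ring | rewrite e subrr].
by move/eqP; rewrite mulf_eq0 subr_eq0 (negbTE t1) subr_eq0 => /eqP.
Qed.

Lemma sum_psi_mob t :
  \sum_(y | (y != 0) && (y + 1 != 0)) psi (mob t y) =
  if t == 1 then #|F|%:R - 2 else - psi t - 1.
Proof.
have mob0 : mob t 0 = 1 by rewrite /mob mulr0 add0r divr1.
have mobN1 : mob t (-1) = 0 by rewrite /mob addNr invr0 mulr0.
case: (eqVneq t 1) => [->|t1].
  rewrite (eq_bigr (fun _ => 1)); last first.
    by move=> y /andP[_ y1]; rewrite /mob mul1r divff.
  by rewrite sum_except_0N1 sumr_const -addrA -opprD.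
rewrite sum_except_0N1 mob0 mobN1 psi1 psi0 subr0.
have -> : \sum_y psi (mob t y) = \sum_y psi (if y == -1 then t else mob t y) - psi t.
  rewrite [in RHS](bigD1 (-1)) //= [in LHS](bigD1 (-1)) //= eqxx mobN1 psi0 add0r.
  by rewrite [psi t + _]addrC addrK; apply: eq_bigr => y /negbTE ->.
have -> : \sum_y psi (if y == -1 then t else mob t y) = \sum_y psi y.
  by rewrite [RHS](reindex_inj (mob_ext_inj t1)).
by rewrite sum_psi sub0r.
Qed.

Theorem jacobi_sum_norm :
  (\sum_x psi x * psi (x + 1)) * (\sum_y psi y^-1 * psi (y + 1)^-1) = #|F|%:R.
Proof.
rewrite mulrC mulr_suml (bigID (fun y => (y != 0) && (y + 1 != 0))) /=.
rewrite [X in _ + X]big1 ?addr0; last first.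
  by move=> y /nandP[] /negPn /eqP ->; rewrite invr0 psi0 !(mul0r, mulr0).
rewrite (eq_bigr (fun y => \sum_t psi t * psi (mob t y))); last first.
  by move=> y /andP[y0 y1]; rewrite jacobi_sum_rescale.
rewrite exchange_big /=.
under eq_bigr => t _ do rewrite -mulr_sumr sum_psi_mob.
rewrite (bigD1 1) //= eqxx psi1 mul1r.
rewrite (eq_bigr (fun t => - psi t ^+ 2 - psi t)); last first.
  by move=> t /negbTE ->; rewrite expr2; ring.
have sum_nz_eqN1 (f : F -> K) : f 1 = 1 -> \sum_t f t = 0 -> \sum_(t | t != 1) f t = -1.
  by move=> f1; rewrite (bigD1 1) //= f1 addrC => /eqP; rewrite addr_eq0 => /eqP.
rewrite sumrB sumrN sum_nz_eqN1 ?sum_nz_eqN1 ?psi1 ?expr1n //; ring.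
Qed.

End JacobiSum.

Lemma sqr_multiple_add4_sqr_eq0 (P : nat) (m z : int) : odd P ->
  (m * P%:Z) ^+ 2 + 4 * z ^+ 2 = P%:Z ^+ 2 -> z = 0.
Proof.
move=> oddP e; have [w Pw] : exists w : int, P%:Z = 2 * w + 1.
  by exists (P./2)%:Z; rewrite -[P in LHS](odd_double_half P) oddP /=; lia.
rewrite Pw in e; have w_ge0 : 0 <= w by lia.
have [m0|m1] : m ^+ 2 = 0 \/ m ^+ 2 = 1 by nia.
- exfalso; nia.
- nia.
Qed.

(* Uniqueness of the representation [P = a^2 + 4 b^2], compared with
   [P = s^2 + 4 * 1^2]: [P] divides [(a s + 4 b) (a s - 4 b)], and a factor
   [m P] yields [(m P)^2 + 4 (a -+ b s)^2 = P^2]. *)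
Lemma sqr_add4_sqr_uniq (P : nat) (a b s : int) : prime P -> odd P ->
  a ^+ 2 + 4 * b ^+ 2 = P%:Z -> s ^+ 2 + 4 = P%:Z -> b ^+ 2 = 1.
Proof.
move=> primeP oddP eP sP.
have sqr1_of_dvd c : c ^+ 2 = b ^+ 2 -> (P%:Z %| a * s + 4 * c)%Z -> b ^+ 2 = 1.
  move=> cb /dvdzP[m em].
  have : (m * P%:Z) ^+ 2 + 4 * (a - c * s) ^+ 2 = P%:Z ^+ 2.
    rewrite -em; transitivity ((a ^+ 2 + 4 * c ^+ 2) * (s ^+ 2 + 4)); first ring.
    by rewrite cb eP sP expr2.
  move/(sqr_multiple_add4_sqr_eq0 oddP)/eqP; rewrite subr_eq0 => /eqP ac.
  have : (c ^+ 2 - 1) * P%:Z = 0.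
    have -> : (c ^+ 2 - 1) * P%:Z = c ^+ 2 * (s ^+ 2 + 4) - (a ^+ 2 + 4 * c ^+ 2).
      by rewrite cb sP eP; ring.
    by rewrite ac; ring.
  move/eqP; rewrite mulf_eq0 => /orP[/eqP c1|/eqP P0].
    by apply/eqP; rewrite -cb -subr_eq0 c1.
  by have := prime_gt0 primeP; lia.
have : (P%:Z %| (a * s + 4 * b) * (a * s + 4 * - b))%Z.
  apply/dvdzP; exists (P%:Z - 4 - 4 * b ^+ 2).
  transitivity ((P%:Z - 4 * b ^+ 2) * (P%:Z - 4) - 16 * b ^+ 2); last ring.
  by rewrite -{1}eP -sP; ring.
rewrite dvdzE abszM Euclid_dvdM // -!dvdzE => /orP[]; apply: sqr1_of_dvd => //.
exact: sqrrN.
Qed.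

Lemma sum_ord_modn (V : nmodType) (f : nat -> V) e k :
  \sum_(j < e * k) f (j %% e)%N = (\sum_(r < e) f r) *+ k.
Proof.
elim: k => [|k IHk]; first by rewrite muln0 big_ord0 mulr0n.
rewrite mulnS big_split_ord /= mulrS -IHk; congr (_ + _).
  by apply: eq_bigr => j _; rewrite modn_small.
by apply: eq_bigr => j _; rewrite modnDl.
Qed.

Definition re4 (j : nat) : int :=
  match (j %% 4)%N with 0 => 1 | 2 => -1 | _ => 0 end.
Definition im4 (j : nat) : int :=
  match (j %% 4)%N with 1 => 1 | 3 => -1 | _ => 0 end.

Lemma expCi4 : ('i : algC) ^+ 4 = 1.
Proof. by rewrite (exprM _ 2 2) sqrCi expr2 mulN1r opprK. Qed.

Lemma expCi j : ('i : algC) ^+ j = (re4 j)%:~R + 'i * (im4 j)%:~R.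
Proof.
rewrite -(expr_mod j expCi4) /re4 /im4.
case: (j %% 4)%N (ltn_pmod j (isT : 0 < 4)%N) => [|[|[|[|]]]] //= _.
- by rewrite expr0 mulr0 addr0.
- by rewrite expr1 add0r mulr1.
- by rewrite sqrCi mulr0 addr0.
- by rewrite exprS sqrCi add0r rmorphN1.
Qed.

Lemma expCi_cube j : (('i : algC) ^+ j) ^+ 3 = (re4 j)%:~R - 'i * (im4 j)%:~R.
Proof.
rewrite -exprM expCi /re4 /im4 mulnC -modnMm.
case: (j %% 4)%N (ltn_pmod j (isT : 0 < 4)%N) => [|[|[|[|]]]] //= _;
  by rewrite ?(rmorph0, rmorph1, rmorphN1, mulr0, mulr1, mulrN1, addr0, subr0, add0r, sub0r, opprK).
Qed.

Section QuarticClasses.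

Variable F : finFieldType.
Hypothesis cardF_mod8 : #|F| = 5 %[mod 8].

Local Notation n := #|F|.-1.
Local Notation k := (#|F| %/ 8)%N.

Lemma cardF_eq : #|F| = (8 * k + 5)%N.
Proof. by have := divn_eq #|F| 8; rewrite cardF_mod8; lia. Qed.

Lemma n_eq : n = (4 * (2 * k + 1))%N.
Proof. by rewrite cardF_eq; lia. Qed.

Lemma n_gt0 : (0 < n)%N.
Proof. by rewrite n_eq muln_gt0 addn1. Qed.

Lemma four_dvd_n : (4 %| n)%N.
Proof. by rewrite n_eq dvdn_mulr. Qed.

Section Generator.

Variable g : F.
Hypothesis g_neq0 : g != 0.
Hypothesis g_gen : forall x : F, x != 0 -> exists k : nat, x = g ^+ k.

Lemma expg_n : g ^+ n = 1.
Proof.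
apply: (mulfI g_neq0); rewrite mulr1 -exprS prednK; first exact: expf_card.
by rewrite cardF_eq addnS.
Qed.

Lemma expg_mod j : g ^+ (j %% n) = g ^+ j.
Proof. exact: expr_mod expg_n. Qed.

Lemma expg_ord_image : [set g ^+ j | j : 'I_n in [set: 'I_n]] = [set~ 0].
Proof.
apply/setP => x; rewrite !inE; apply/imsetP/idP => [[j _ ->]|x0].
  exact: expf_neq0.
have [j ->] := g_gen x0.
by exists (Ordinal (ltn_pmod j n_gt0)); rewrite ?inE ?expg_mod.
Qed.

Lemma expg_ord_inj : injective (fun j : 'I_n => g ^+ j).
Proof.
suff : {in [set: 'I_n] &, injective (fun j : 'I_n => g ^+ j)}.
  by move=> inj i j; apply: inj; rewrite inE.
by apply/imset_injP; rewrite expg_ord_image cardsT card_ord cardsC1.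
Qed.

Lemma expg_inj i j : g ^+ i = g ^+ j -> i = j %[mod n].
Proof.
rewrite -expg_mod -(expg_mod j) => e.
by case: (expg_ord_inj (x1 := Ordinal (ltn_pmod i n_gt0)) (x2 := Ordinal (ltn_pmod j n_gt0)) e).
Qed.

(* The discrete logarithm to the base [g], with junk value [0] at [x = 0]. *)
Definition ind (x : F) : nat :=
  if [pick j : 'I_n | g ^+ j == x] is Some j then val j else 0%N.

Lemma ind_lt x : (ind x < n)%N.
Proof. by rewrite /ind; case: pickP => [j _|_]; rewrite ?ltn_ord ?n_gt0. Qed.

Lemma indK x : x != 0 -> g ^+ ind x = x.
Proof.
move=> x0; have [j ->] := g_gen x0.
rewrite /ind; case: pickP => [i /eqP //|].
by move=> /(_ (Ordinal (ltn_pmod j n_gt0))); rewrite /= expg_mod eqxx.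
Qed.

Lemma ind_expg j : ind (g ^+ j) = (j %% n)%N.
Proof. by rewrite -(expg_inj (indK (expf_neq0 _ g_neq0))) modn_small ?ind_lt. Qed.

Lemma indM x y : x != 0 -> y != 0 -> ind (x * y) = ((ind x + ind y) %% n)%N.
Proof. by move=> x0 y0; rewrite -ind_expg exprD !indK. Qed.

Lemma ind1 : ind 1 = 0%N.
Proof. by rewrite -(expr0 g) ind_expg mod0n. Qed.

Lemma indg : ind g = 1%N.
Proof. by rewrite -[g]expr1 ind_expg modn_small // n_eq; lia. Qed.

Lemma indN1 : ind (-1) = (n %/ 2)%N.
Proof.
have sqr_half : (g ^+ (n %/ 2)) ^+ 2 = 1.
  by rewrite -exprM divnK ?expg_n // n_eq dvdn_mulr.
have : (g ^+ (n %/ 2) == 1) || (g ^+ (n %/ 2) == -1) by rewrite -sqrf_eq1 sqr_half.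
case/orP => /eqP e; last by rewrite -e ind_expg modn_small // n_eq; lia.
by have := expg_inj (etrans e (esym (expr0 g))); rewrite mod0n modn_small n_eq; lia.
Qed.

Definition ind4 x := (ind x %% 4)%N.

Lemma ind4_lt x : (ind4 x < 4)%N.
Proof. by rewrite ltn_pmod. Qed.

Lemma ind4M x y : x != 0 -> y != 0 -> ind4 (x * y) = ((ind4 x + ind4 y) %% 4)%N.
Proof. by move=> x0 y0; rewrite /ind4 indM // modn_dvdm ?modnDm // n_eq dvdn_mulr. Qed.

Lemma ind4g : ind4 g = 1%N.
Proof. by rewrite /ind4 indg. Qed.

Lemma ind4N x : x != 0 -> ind4 (- x) = ((ind4 x + 2) %% 4)%N.
Proof.
move=> x0; rewrite -mulN1r ind4M ?oppr_eq0 ?oner_eq0 // /ind4 indN1 n_eq addnC.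
by rewrite (_ : (4 * (2 * k + 1)) %/ 2 %% 4 = 2)%N //; lia.
Qed.

Lemma sum_nz_ind (V : nmodType) (f : nat -> V) :
  \sum_(x | x != 0) f (ind x) = \sum_(j < n) f j.
Proof.
rewrite (eq_bigl (mem [set~ 0])) => [|x]; last by rewrite !inE.
rewrite -expg_ord_image big_imset /=; last by move=> i j _ _; apply: expg_ord_inj.
by apply: eq_big => [j|j _]; rewrite ?inE // ind_expg modn_small.
Qed.

Lemma sum_nz_ind4 (V : nmodType) (f : nat -> V) :
  \sum_(x | x != 0) f (ind4 x) = (\sum_(r < 4) f r) *+ (2 * k + 1).
Proof. by rewrite (sum_nz_ind (fun j => f (j %% 4)%N)) n_eq sum_ord_modn. Qed.

Lemma mem_cyc_class e i x : (0 < e)%N -> (e %| n)%N -> (i < e)%N ->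
  (x \in cyc_class g e i) = (x != 0) && (ind x %% e == i)%N.
Proof.
move=> e_gt0 e_dvd_n i_lt_e; rewrite inE; apply/existsP/andP => [[j /eqP ->]|[x0 /eqP xi]].
  by rewrite expf_neq0 // ind_expg modn_dvdm // mulnC modnMDl modn_small.
have lt_card : (ind x %/ e < #|F|)%N.
  apply: leq_ltn_trans (leq_div _ _) (ltn_trans (ind_lt x) _).
  by rewrite ltn_predL cardF_eq addnS.
by exists (Ordinal lt_card); rewrite /= -{1}(indK x0) {1}(divn_eq (ind x) e) xi mulnC.
Qed.

(* Locked so that [inE] does not unfold membership in [D]. *)
Fact D_key : unit. Proof. exact: tt. Qed.
Definition D := locked_with D_key (cyc_class g 4 0 :|: cyc_class g 4 1).

Lemma DE : D = cyc_class g 4 0 :|: cyc_class g 4 1.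
Proof. exact: unlock. Qed.

Lemma mem_D x : (x \in D) = (x != 0) && (ind4 x < 2)%N.
Proof.
rewrite DE inE !mem_cyc_class ?four_dvd_n // /ind4.
by case: (x != 0) => //=; have := ind4_lt x; rewrite /ind4; lia.
Qed.

Definition reps a := [set y | (y \in D) && (y + a \in D)].

Lemma diff_count_reps a : diff_count D a = #|reps a|.
Proof.
rewrite /diff_count.
have -> : [set xy : F * F | [&& xy.1 \in D, xy.2 \in D & xy.1 - xy.2 == a]] =
    (fun y => (y + a, y)) @: reps a.
  apply/setP => -[x y]; rewrite in_set /=.
  apply/and3P/imsetP => [[xD yD /eqP <-]|[z]].
    by exists y; rewrite ?[in RHS](addrC y) ?subrK // /reps inE (addrC y) subrK xD yD.
  by rewrite inE => /andP[zD zaD] [-> ->]; rewrite zD zaD (addrC z) addrK.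
by rewrite card_imset // => y z [].
Qed.

Lemma card_reps_preim (h : F -> F) a b : injective h ->
  (forall y, (y \in reps b) = (h y \in reps a)) -> #|reps b| = #|reps a|.
Proof.
move=> h_inj reps_h; rewrite -[RHS](card_preimset _ h_inj).
by apply: eq_card => y; rewrite reps_h !inE.
Qed.

Lemma card_repsN a : #|reps (- a)| = #|reps a|.
Proof. by apply: (@card_reps_preim (fun y => y - a)) => [|y]; [exact: addIr | rewrite !inE subrK andbC]. Qed.

(* [-g^2] is a fourth power since [-1 = g^(n/2)] with [n/2 = 2 (mod 4)]. *)
Lemma mem_mulNg2_D w : (- g ^+ 2 * w \in D) = (w \in D).
Proof.
have Ng2_neq0 : - g ^+ 2 != 0 by rewrite oppr_eq0 expf_neq0.
rewrite !mem_D mulf_eq0 (negbTE Ng2_neq0) /=; case: (eqVneq w 0) => //= w0.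
rewrite ind4M // ind4N ?expf_neq0 // expr2 ind4M // ind4g.
by have := ind4_lt w; case: (ind4 w) => [|[|[|[|]]]].
Qed.

Lemma card_reps_mulg2 a : #|reps (g ^+ 2 * a)| = #|reps a|.
Proof.
rewrite -card_repsN -mulNr; symmetry.
apply: (@card_reps_preim (fun y => - g ^+ 2 * y)) => [|y].
  by apply: mulfI; rewrite oppr_eq0 expf_neq0.
by rewrite !inE -mulrDr !mem_mulNg2_D.
Qed.

Lemma card_reps_nz a : a != 0 -> #|reps a| = #|reps (g ^+ odd (ind a))|.
Proof.
move=> a0; rewrite -{1}(indK a0) {1}(divn_eq (ind a) 2) modn2 exprD mulnC.
elim: (ind a %/ 2)%N => [|j IHj]; first by rewrite muln0 mul1r.
by rewrite mulnS exprD -mulrA card_reps_mulg2.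
Qed.

Lemma card_D : #|D| = (2 * (2 * k + 1))%N.
Proof.
rewrite -sum1_card big_mkcond (bigD1 0) //= mem_D eqxx add0n.
rewrite (eq_bigr (fun x => nat_of_bool (ind4 x < 2)%N)) => [|x x0]; last by rewrite mem_D x0.
by rewrite (sum_nz_ind4 (fun r => nat_of_bool (r < 2)%N)) !big_ord_recr big_ord0 -mulr_natr natn.
Qed.

Lemma sum_card_reps : (\sum_a #|reps a| = #|D| * #|D|)%N.
Proof.
have card_bool (A : {set F}) : #|A| = (\sum_y (y \in A))%N.
  by rewrite -sum1_card big_mkcond /=; apply: eq_bigr => y _; case: (y \in A).
rewrite -sum_nat_const (eq_bigr (fun a : F => \sum_(y in D) ((y + a)%R \in D))%N); last first.
  move=> a _; rewrite -sum1_card (eq_bigl (fun y => (y \in D) && ((y + a)%R \in D))).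
    by rewrite big_mkcondr /=; apply: eq_bigr => y _; case: (_ \in D).
  by move=> y; rewrite inE.
rewrite exchange_big /=; apply: eq_bigr => y _.
by rewrite card_bool [RHS](reindex_inj (addrI y)).
Qed.

Local Notation u := #|reps 1|.
Local Notation v := #|reps g|.

Lemma u_add_v : (u + v = 4 * k + 1)%N.
Proof.
have := sum_card_reps; rewrite (bigD1 0) //= card_D.
have -> : reps 0 = D by apply/setP => y; rewrite inE addr0 andbb.
rewrite card_D (eq_bigr (fun a => if odd (ind4 a) then v else u)); last first.
  by move=> a a0; rewrite (card_reps_nz a0) /ind4 odd_mod //; case: (odd _).
rewrite (sum_nz_ind4 (fun r => if odd r then v else u)) !big_ord_recr big_ord0 /=.
rewrite -mulr_natr natn; nia.
Qed.

(* [cycsum phi = \sum_(i, j < 4) phi i j * (i, j)_4], with [(i, j)_4] the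
   cyclotomic numbers of order 4. *)
Definition cycsum (phi : nat -> nat -> int) : int :=
  \sum_(x | (x != 0) && (x + 1 != 0)) phi (ind4 x) (ind4 (x + 1)).

Lemma cycsum_lin a b phi phi' :
  cycsum (fun i j => a * phi i j + b * phi' i j) = a * cycsum phi + b * cycsum phi'.
Proof. by rewrite /cycsum big_split /= -!mulr_sumr. Qed.

Lemma eq_cycsum phi phi' : (forall i j, (i < 4)%N -> (j < 4)%N -> phi i j = phi' i j) ->
  cycsum phi = cycsum phi'.
Proof. by move=> eq_phi; apply: eq_bigr => x _; rewrite eq_phi ?ind4_lt. Qed.

(* The involution [x |-> -(x + 1)] of the summation range. *)
Lemma cycsum_sym phi :
  cycsum phi = cycsum (fun i j => phi ((j + 2) %% 4) ((i + 2) %% 4))%N.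
Proof.
rewrite /cycsum (reindex_inj (h := fun x => - (x + 1))) /=; last first.
  by move=> x y /oppr_inj /addIr.
have Nx1 x : - (x + 1) + 1 = - x by rewrite opprD subrK.
rewrite (eq_bigl (fun x => (x != 0) && (x + 1 != 0))) => [|x]; last first.
  by rewrite Nx1 !oppr_eq0 andbC.
by rewrite /=; apply: eq_bigr => x /andP[x0 x1]; rewrite Nx1 !ind4N.
Qed.

Lemma card_cycsum (A : {set F}) (P : nat -> nat -> bool) :
  (forall y, (y \in A) = [&& y != 0, y + 1 != 0 & P (ind4 y) (ind4 (y + 1))]) ->
  #|A|%:Z = cycsum (fun i j => (P i j : nat)%:Z).
Proof.
move=> memA; rewrite -sum1_card -natz natr_sum big_mkcond /cycsum [RHS]big_mkcond /=.
by apply: eq_bigr => y _; rewrite memA; case: (y != 0); case: (y + 1 != 0); case: (P _ _).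
Qed.

Lemma u_cycsum : u%:Z = cycsum (fun i j => (((i < 2) && (j < 2))%N : nat)%:Z).
Proof.
apply: card_cycsum => y; rewrite inE !mem_D.
by case: (y != 0); case: (y + 1 != 0); rewrite ?andbF.
Qed.

Lemma v_cycsum :
  v%:Z = cycsum (fun i j => ((((i + 1) %% 4 < 2) && ((j + 1) %% 4 < 2))%N : nat)%:Z).
Proof.
rewrite -(card_preimset _ (mulfI g_neq0)); apply: card_cycsum => y.
rewrite !inE -[X in _ + X]mulr1 -mulrDr !mem_D !mulf_eq0 (negbTE g_neq0) /=.
case: (eqVneq y 0) => //= y0; case: (eqVneq (y + 1) 0) => //= [|y1]; first by rewrite andbF.
by rewrite !ind4M // ind4g !(addnC 1%N).
Qed.

(* The involution [cycsum_sym] maps the combination [r] below to [-r]. *)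
Lemma cycsum_im : cycsum (fun i j => im4 (i + j)) = 2 * (u%:Z - v%:Z).
Proof.
pose r i j := 1 * (2 * (((i < 2) && (j < 2))%N : nat)%:Z +
   (-2) * ((((i + 1) %% 4 < 2) && ((j + 1) %% 4 < 2))%N : nat)%:Z) + (-1) * im4 (i + j).
have r_eq : cycsum r = 1 * (2 * u%:Z + (-2) * v%:Z) + (-1) * cycsum (fun i j => im4 (i + j)).
  by rewrite /r !cycsum_lin -u_cycsum -v_cycsum.
have r_anti : cycsum r + cycsum r = 0.
  rewrite {2}cycsum_sym -[X in X + _]mul1r -[X in _ + X]mul1r -cycsum_lin.
  rewrite (@eq_cycsum _ (fun _ _ => 0)) ?/cycsum ?big1 // => i j.
  by rewrite /r /im4; case: i => [|[|[|[|]]]] //; case: j => [|[|[|[|]]]].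
by move: r_anti; rewrite r_eq; lia.
Qed.

Definition chi4 (x : F) : algC := if x == 0 then 0 else 'i ^+ ind x.

Lemma chi4E x : x != 0 -> chi4 x = 'i ^+ ind4 x.
Proof. by move=> x0; rewrite /chi4 (negbTE x0) (expr_mod _ expCi4). Qed.

Lemma chi4_0 : chi4 0 = 0.
Proof. by rewrite /chi4 eqxx. Qed.

Lemma chi4_1 : chi4 1 = 1.
Proof. by rewrite /chi4 oner_eq0 ind1. Qed.

Lemma chi4M x y : chi4 (x * y) = chi4 x * chi4 y.
Proof.
have [->|x0] := eqVneq x 0; first by rewrite mul0r chi4_0 mul0r.
have [->|y0] := eqVneq y 0; first by rewrite mulr0 chi4_0 mulr0.
have expCi_n : ('i : algC) ^+ n = 1 by rewrite n_eq exprM expCi4 expr1n.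
by rewrite /chi4 mulf_eq0 (negbTE x0) (negbTE y0) indM // (expr_mod _ expCi_n) exprD.
Qed.

Lemma chi4_mulg x : chi4 (g * x) = 'i * chi4 x.
Proof. by rewrite chi4M /chi4 (negbTE g_neq0) indg. Qed.

Lemma chi4V x : chi4 x^-1 = chi4 x ^+ 3.
Proof.
have [->|x0] := eqVneq x 0; first by rewrite invr0 chi4_0 expr0n.
have : chi4 x * chi4 x^-1 = 1 by rewrite -chi4M divff // chi4_1.
rewrite chi4E // => /(congr1 (fun z => ('i ^+ ind4 x) ^+ 3 * z)).
by rewrite mulr1 mulrA -exprSr -exprM mulnC exprM expCi4 expr1n mul1r.
Qed.

(* Multiplying by [g] scales the sums of [chi4] and [chi4^2] by ['i] and [-1]. *)
Lemma sum_chi4 : \sum_x chi4 x = 0.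
Proof.
have : (1 - 'i) * \sum_x chi4 x = 0.
  rewrite mulrBl mul1r mulr_sumr [X in X - _](reindex_inj (mulfI g_neq0)) /=.
  by rewrite -sumrB big1 // => x _; rewrite chi4_mulg subrr.
move/eqP; rewrite mulf_eq0 subr_eq0 => /orP[/eqP i1|/eqP //].
by have := @sqrCi algC; rewrite -i1 expr1n => /eqP; rewrite -subr_eq0 opprK -mulr2n pnatr_eq0.
Qed.

Lemma sum_chi4_sqr : \sum_x chi4 x ^+ 2 = 0.
Proof.
have : \sum_x chi4 x ^+ 2 + \sum_x chi4 x ^+ 2 = 0.
  rewrite [X in X + _](reindex_inj (mulfI g_neq0)) -big_split big1 // => x _ /=.
  by rewrite chi4_mulg exprMn sqrCi mulN1r addNr.
by move/eqP; rewrite -mulr2n mulrn_eq0 => /eqP.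
Qed.

Lemma jacobi_sum_chi4 : \sum_x chi4 x * chi4 (x + 1) =
  (cycsum (fun i j => re4 (i + j)))%:~R + 'i * (cycsum (fun i j => im4 (i + j)))%:~R.
Proof.
rewrite /cycsum !rmorph_sum mulr_sumr -big_split /= (bigID (fun x => (x != 0) && (x + 1 != 0))).
rewrite /= [X in _ + X]big1 ?addr0 => [|x /nandP[] /negPn /eqP ->]; last 2 first.
- by rewrite chi4_0 mul0r.
- by rewrite chi4_0 mulr0.
by apply: eq_bigr => x /andP[x0 x1]; rewrite !chi4E // -exprD expCi.
Qed.

Lemma jacobi_sum_chi4V : \sum_x chi4 x^-1 * chi4 (x + 1)^-1 =
  (cycsum (fun i j => re4 (i + j)))%:~R - 'i * (cycsum (fun i j => im4 (i + j)))%:~R.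
Proof.
rewrite /cycsum !rmorph_sum mulr_sumr -sumrB /= (bigID (fun x => (x != 0) && (x + 1 != 0))).
rewrite /= [X in _ + X]big1 ?addr0 => [|x /nandP[] /negPn /eqP ->]; last 2 first.
- by rewrite invr0 chi4_0 mul0r.
- by rewrite invr0 chi4_0 mulr0.
by apply: eq_bigr => x /andP[x0 x1]; rewrite !chi4V -exprMn !chi4E // -exprD expCi_cube.
Qed.

Lemma cycsum_norm :
  cycsum (fun i j => re4 (i + j)) ^+ 2 + cycsum (fun i j => im4 (i + j)) ^+ 2 = #|F|%:Z.
Proof.
have := jacobi_sum_norm chi4M chi4_0 chi4_1 sum_chi4 sum_chi4_sqr.
rewrite jacobi_sum_chi4 jacobi_sum_chi4V; move: (cycsum _) (cycsum _) => b a.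
have -> : (a%:~R + 'i * b%:~R) * (a%:~R - 'i * b%:~R) = (a ^+ 2 + b ^+ 2)%:~R :> algC.
  rewrite rmorphD !rmorphXn /=.
  transitivity ((a%:~R : algC) ^+ 2 - 'i ^+ 2 * b%:~R ^+ 2); first ring.
  by rewrite sqrCi mulN1r opprK.
by move=> norm; apply: (@intr_inj algC); rewrite norm /= pmulrn.
Qed.

Lemma u_sub_v_sqr s : prime #|F| -> #|F| = (s ^ 2 + 4)%N -> (u%:Z - v%:Z) ^+ 2 = 1.
Proof.
move=> primeF cardF_s.
apply: (@sqr_add4_sqr_uniq #|F| (cycsum (fun i j => re4 (i + j))) _ s%:Z primeF).
- by rewrite cardF_eq oddD oddM.
- by rewrite -cycsum_norm cycsum_im exprMn.
- by rewrite cardF_s PoszD (_ : (s ^ 2)%N = s%:Z ^+ 2 :> int).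
Qed.

Lemma card_reps_values s : prime #|F| -> #|F| = (s ^ 2 + 4)%N ->
  (u = 2 * k /\ v = 2 * k + 1 \/ u = 2 * k + 1 /\ v = 2 * k)%N.
Proof.
move=> primeF cardF_s; have := u_add_v.
by move: (u_sub_v_sqr primeF cardF_s) => /eqP; rewrite sqrf_eq1 => /orP[] /eqP; lia.
Qed.

Theorem diff_count_deficient_set s : prime #|F| -> #|F| = (s ^ 2 + 4)%N ->
  let S := [set a | (a != 0) && (diff_count D a == 2 * k)%N] in
  S = cyc_class g 2 0 \/ S = cyc_class g 2 1.
Proof.
move=> primeF cardF_s S.
have memS a : (a \in S) = (a != 0) && ((if odd (ind a) then v else u) == 2 * k)%N.
  rewrite inE diff_count_reps; case: (eqVneq a 0) => //= a0.
  by rewrite card_reps_nz //; case: (odd _).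
have two_dvd_n : (2 %| n)%N by rewrite n_eq; apply: dvdn_mulr.
have [[u_eq v_eq]|[u_eq v_eq]] := card_reps_values primeF cardF_s; [left | right];
  apply/setP => a; rewrite memS u_eq v_eq mem_cyc_class // modn2;
  by case: (a != 0) => //=; case: (odd _) => /=; lia.
Qed.

End Generator.

End QuarticClasses.

Theorem lemma4 (p : nat) (hp : prime p) (hp8 : p = 5 %[mod 8])
  (hs : exists s : nat, odd s /\ p = (s ^ 2 + 4)%N)
  (g : 'F_p) (hg : is_generator g) :
  let D := cyc_class g 4 0 :|: cyc_class g 4 1 in
  let S_D := [set a : 'F_p | (a != 0) && (diff_count D a == (p - 5) %/ 4)%N] in
  S_D = cyc_class g 2 0 \/ S_D = cyc_class g 2 1.
Proof.
(* The parity of [s] already follows from [p = 5 (mod 8)]. *)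
case: hg => g_neq0 g_gen; case: hs => s [_ p_s] D S_D.
have cardFp : #|'F_p| = p := card_Fp hp.
have cardF_mod8 : #|'F_p| = 5 %[mod 8] by rewrite cardFp.
have := diff_count_deficient_set cardF_mod8 g_neq0 g_gen; rewrite cardFp => /(_ s hp p_s).
rewrite /S_D /D -DE (_ : (p - 5) %/ 4 = 2 * (p %/ 8))%N //.
by have := divn_eq p 8; rewrite hp8; lia.
Qed.
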